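(* Let $\mathcal X$ be a countable set, $\mathcal Y$ a finite set, $\rho$ a probability distribution on $\mathcal X$, and for each $x$ let $\mu(\cdot|x)$ and $\pi_{\mathrm{ref}}(\cdot|x)$ be probability distributions on $\mathcal Y$ with $\mu(y|x)>0$ and $\pi_{\mathrm{ref}}(y|x)>0$ for all $y$. Let $r:\mathcal X\times\mathcal Y\to\mathbb R$, $\tau>0$, and define for policies $\pi$ (with $\pi(y|x)>0$) and functions $V:\mathcal X\to\mathbb R$ $$\mathcal L(\pi,V)=\tfrac12\,\mathbb E_{x\sim\rho,\,y\sim\mu(\cdot|x)}\Big[\Big(r(x,y)-V(x)-\tau\log\tfrac{\pi(y|x)}{\pi_{\mathrm{ref}}(y|x)}\Big)^2\Big],$$ and $V^\pi(x)=\mathbb E_{y\sim\mu(\cdot|x)}\big[r(x,y)-\tau\log\frac{\pi(y|x)}{\pi_{\mathrm{ref}}(y|x)}\big]$ (the minimiser of $V\mapsto\mathcal L(\pi,V)$). Let $V^*(x)=\tau\log\mathbb E_{y\sim\pi_{\mathrm{ref}}(\cdot|x)}[e^{r(x,y)/\tau}]$ and $\pi^*(y|x)=\pi_{\mathrm{ref}}(y|x)e^{(r(x,y)-V^*(x))/\tau}$. Fix $V:\mathcal X\to\mathbb R$ and let $\pi_V$ be a minimiser of $\pi\mapsto\mathcal L(\pi,V)$ over policies with $\pi_V(y|x)>0$ for all $x,y$. Then for every $x\in\operatorname{supp}\rho$: (i) $\pi_V(y|x)\propto\pi_{\mathrm{ref}}(y|x)\exp\Big(\tfrac1\tau\Big[r(x,y)-\tfrac{\pi_V(y|x)}{\mu(y|x)}\big(V^{\pi_V}(x)-V(x)\big)\Big]\Big)$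 as a function of $y$; (ii) for all $y\in\mathcal Y$, $$\Big|\log\frac{\pi_V(y|x)}{\pi^*(y|x)}\Big|\le\frac2\tau\max_{y'\in\mathcal Y}\Big|\big(V^{\pi_V}(x)-V(x)\big)\Big(1-\frac{\pi_V(y'|x)}{\mu(y'|x)}\Big)\Big|.$$
   Context: $\pi^*$ is the optimal KL-regularised policy (maximiser of $\mathbb E_{x\sim\rho,y\sim\pi}[r(x,y)]-\tau\,\mathbb E_{x\sim\rho}D_{\mathrm{KL}}(\pi(\cdot|x)\|\pi_{\mathrm{ref}}(\cdot|x))$); $\mu$ is the data-generating behaviour distribution. *)

From HB Require Import structures.
From mathcomp Require Import all_boot all_order all_algebra.
From mathcomp Require Import all_classical all_reals all_analysis.
Set Implicit Arguments. Unset Strict Implicit. Unset Printing Implicit Defensive.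
Import Order.TTheory GRing.Theory Num.Theory.
Local Open Scope ring_scope.
Local Open Scope classical_set_scope.

Section Defs.
Variables (R : realType) (X : countType) (Y : finType).

Definition pos_policy (p : X -> Y -> R) : Prop :=
  (forall x y, 0 < p x y) /\ (forall x, \sum_(y : Y) p x y = 1).

Definition prob_on (rho : X -> R) : Prop :=
  (forall x, 0 <= rho x) /\ esum [set: X] (fun x => (rho x)%:E) = 1%E.

Definition lossL (rho : X -> R) (mu piref : X -> Y -> R) (r : X -> Y -> R)
    (tau : R) (pi : X -> Y -> R) (V : X -> R) : \bar R :=
  ((1/2)%:E * esum [set: X] (fun x => (rho x * \sum_(y : Y) mu x y *
      (r x y - V x - tau * ln (pi x y / piref x y)) ^+ 2)%:E))%E.

Definition Vpi (mu piref : X -> Y -> R) (r : X -> Y -> R) (tau : R)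
    (pi : X -> Y -> R) (x : X) : R :=
  \sum_(y : Y) mu x y * (r x y - tau * ln (pi x y / piref x y)).

Definition Vstar (piref : X -> Y -> R) (r : X -> Y -> R) (tau : R) (x : X) : R :=
  tau * ln (\sum_(y : Y) piref x y * expR (r x y / tau)).

Definition pistar (piref : X -> Y -> R) (r : X -> Y -> R) (tau : R)
    (x : X) (y : Y) : R :=
  piref x y * expR ((r x y - Vstar piref r tau x) / tau).

End Defs.

From HB Require Import structures.
From mathcomp Require Import all_boot all_order all_algebra.
From mathcomp Require Import all_classical all_reals all_analysis.
From mathcomp Require Import ring lra.
Import Order.TTheory GRing.Theory Num.Theory.
Local Open Scope ring_scope.

(* The loss is finite and splits over states, so at a state x with rho x > 0
   the policy piV(.|x) minimises the per-state objective
   sum_y mu(y|x) (r - V - tau log(pi/piref))^2 over positive distributions.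
   Moving mass between two actions gives the first-order condition: with the
   residual e(y) = r - V - tau log(piV/piref), the ratio mu(y|x) e(y) / piV(y|x)
   does not depend on y, and since piV(.|x) sums to 1 this constant is
   sum_y mu e = V^piV(x) - V(x); this is (i).  For (ii),
   log(piV/pistar) = (Vstar(x) - V(x) - e(y)) / tau, and exp((Vstar - V)/tau) is a
   piV-average of exp(e/tau), so Vstar - V and e(y) both lie within
   max_y' |e(y') - (V^piV - V)| of V^piV - V. *)

Section RealFacts.
Context {R : realType}.

Definition sq_log_loss (m A tau ref s : R) : R := m * (A - tau * ln (s / ref)) ^+ 2.

Lemma is_derive_sq_log_loss (m A tau ref s : R) : 0 < ref -> 0 < s ->
  is_derive s 1 (sq_log_loss m A tau ref)
    (- (2 * m * tau) * (A - tau * ln (s / ref)) / s).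
Proof.
move=> ref_gt0 s_gt0.
have refVs_gt0 : 0 < ref^-1 * s by rewrite mulr_gt0 // invr_gt0.
have dln := is_derive1_comp (is_derive1_ln refVs_gt0)
  (is_deriveZ ref^-1 (@is_derive_id _ _ s 1)).
have := is_deriveZ m (is_deriveX 2 (is_deriveB (is_derive_cst A s 1)
  (is_deriveZ tau dln))).
set f := (X in is_derive _ _ X _) => df.
have -> : sq_log_loss m A tau ref = f.
  by apply/funext => z; rewrite /sq_log_loss /f /= [z / _]mulrC.
apply: (is_derive_eq df); rewrite [s / _]mulrC.
rewrite -[LHS]/(m * (2 * (A - tau * ln (ref^-1 * s)) *
  (0 - tau * ((ref^-1 * s)^-1 * (ref^-1 * 1))))).
by field; rewrite !gt_eqF.
Qed.

Lemma transfer_min_derive_eq (f g f' g' : R -> R) (a b : R) : 0 < a -> 0 < b ->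
  (forall s : R, 0 < s -> is_derive s 1 f (f' s)) ->
  (forall s : R, 0 < s -> is_derive s 1 g (g' s)) ->
  (forall t, - a < t -> t < b -> f a + g b <= f (a + t) + g (b - t)) ->
  f' a = g' b.
Proof.
move=> a_gt0 b_gt0 df dg ab_min.
pose h t := f (a + t) + g (b - t).
have dh t : - a < t -> t < b -> is_derive t 1 h (f' (a + t) - g' (b - t)).
  move=> at_gt bt_gt.
  have da := is_deriveD (is_derive_cst a t 1) (@is_derive_id _ _ t 1).
  have db := is_deriveB (is_derive_cst b t 1) (@is_derive_id _ _ t 1).
  have := is_deriveD
    (@is_derive1_comp _ _ (cst a + id) _ _ _ (df (a + t) ltac:(lra)) da)
    (@is_derive1_comp _ _ (cst b - id) _ _ _ (dg (b - t) ltac:(lra)) db).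
  by rewrite add0r sub0r mulr1 mulrN1.
have dh0 : is_derive (0 : R) (1 : R) h 0.
  apply: (@derive1_at_min _ h (- a) b 0); first lra.
  - by move=> t; rewrite in_itv /= => /andP[? ?]; case: (dh t _ _).
  - by rewrite in_itv /=; apply/andP; split; lra.
  - by move=> t; rewrite in_itv /= => /andP[? ?]; rewrite /h addr0 subr0; exact: ab_min.
have := @derive_val _ _ _ _ _ _ _ dh0.
rewrite (@derive_val _ _ _ _ _ _ _ (dh 0 _ _)) ?addr0 ?subr0; lra.
Qed.

Lemma sumrB_eq_off2 {Y : finType} (F G : Y -> R) (a b : Y) :
  a != b -> (forall y, y != a -> y != b -> F y = G y) ->
  \sum_(y : Y) F y - \sum_(y : Y) G y = F a - G a + (F b - G b).
Proof.
move=> ab FG; rewrite -sumrB (bigD1 a) // (bigD1 b) /=; last by rewrite eq_sym.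
by rewrite big1 ?addr0 // => y /andP[ya yb]; rewrite FG // subrr.
Qed.

Lemma const_ratio_sum {Y : finType} {c p : Y -> R} :
  (forall y, p y != 0) -> \sum_(y : Y) p y = 1 ->
  (forall a b, c a / p a = c b / p b) ->
  forall y, c y = p y * \sum_(i : Y) c i.
Proof.
move=> p_neq0 p_sum1 c_ratio y.
have -> : \sum_(i : Y) c i = \sum_(i : Y) c y / p y * p i.
  by apply: eq_bigr => i _; rewrite (c_ratio y i) divfK.
by rewrite -mulr_sumr p_sum1 mulr1 mulrC divfK.
Qed.

Lemma mean_expR_dist_le {Y : finType} {p e : Y -> R} {s d k B : R} :
  0 < s -> (forall y, 0 <= p y) -> \sum_(y : Y) p y = 1 ->
  (forall y, `|e y - k| <= B) ->
  expR (d / s) = \sum_(y : Y) p y * expR (e y / s) -> `|d - k| <= B.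
Proof.
move=> s_gt0 p_ge0 p_sum1 e_near d_mean.
have mean_const c : \sum_(y : Y) p y * expR (c / s) = expR (c / s).
  by rewrite -mulr_suml p_sum1 mul1r.
have d_le : d <= k + B.
  rewrite -(@ler_pM2r _ s^-1) ?invr_gt0 // -ler_expR d_mean -mean_const.
  apply: ler_sum => y _; rewrite ler_wpM2l // ler_expR ler_pM2r ?invr_gt0 //.
  by have := e_near y; rewrite ler_norml; lra.
have d_ge : k - B <= d.
  rewrite -(@ler_pM2r _ s^-1) ?invr_gt0 // -ler_expR d_mean -mean_const.
  apply: ler_sum => y _; rewrite ler_wpM2l // ler_expR ler_pM2r ?invr_gt0 //.
  by have := e_near y; rewrite ler_norml; lra.
by rewrite ler_norml; lra.
Qed.

Section StateLoss.
Context {Y : finType} (m ref A : Y -> R) (tau : R).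
Hypotheses (ref_gt0 : forall y, 0 < ref y) (tau_neq0 : tau != 0).

Definition state_loss (q : Y -> R) : R :=
  \sum_(y : Y) sq_log_loss (m y) (A y) tau (ref y) (q y).

Lemma state_loss_min_stationary (p : Y -> R) :
  (forall y, 0 < p y) -> \sum_(y : Y) p y = 1 ->
  (forall q, (forall y, 0 < q y) -> \sum_(y : Y) q y = 1 ->
     state_loss p <= state_loss q) ->
  forall a b, m a * (A a - tau * ln (p a / ref a)) / p a =
              m b * (A b - tau * ln (p b / ref b)) / p b.
Proof.
move=> p_gt0 p_sum1 p_min a b; have [<- //|ab] := eqVneq a b.
have derive_eq := transfer_min_derive_eq _ _ _ _ _ _ (p_gt0 a) (p_gt0 b)
  (fun s => is_derive_sq_log_loss (m a) (A a) tau (ref a) s (ref_gt0 a))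
  (fun s => is_derive_sq_log_loss (m b) (A b) tau (ref b) s (ref_gt0 b)).
have scaled mm e s : - (2 * mm * tau) * e / s = - (2 * tau) * (mm * e / s).
  by rewrite !mulNr; congr (- _); ring.
suff : - (2 * tau) * (m a * (A a - tau * ln (p a / ref a)) / p a) =
       - (2 * tau) * (m b * (A b - tau * ln (p b / ref b)) / p b).
  by move/mulfI; apply; rewrite oppr_eq0 mulf_neq0 ?pnatr_eq0.
rewrite -!scaled; apply: derive_eq => t ta tb.
pose q y := p y + (if y == a then t else 0) - (if y == b then t else 0).
have qa : q a = p a + t by rewrite /q eqxx (negbTE ab) subr0.
have qb : q b = p b - t by rewrite /q eq_sym (negbTE ab) eqxx addr0.
have q_off y : y != a -> y != b -> q y = p y.
  by move=> ya yb; rewrite /q (negbTE ya) (negbTE yb) addr0 subr0.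
have q_gt0 y : 0 < q y.
  have [->|ya] := eqVneq y a; first by rewrite qa; lra.
  have [->|yb] := eqVneq y b; first by rewrite qb; lra.
  by rewrite q_off.
have q_sum1 : \sum_(y : Y) q y = 1.
  by rewrite sumrB big_split /= p_sum1 -!big_mkcond /= !big_pred1_eq addrK.
have := sumrB_eq_off2 (fun y => sq_log_loss (m y) (A y) tau (ref y) (q y))
  (fun y => sq_log_loss (m y) (A y) tau (ref y) (p y)) a b ab.
rewrite /= qa qb => /(_ (fun y ya yb => congr1 _ (q_off y ya yb))).
have := p_min q q_gt0 q_sum1; rewrite /state_loss; lra.
Qed.

End StateLoss.

End RealFacts.


Local Open Scope classical_set_scope.

Lemma lossL_min_at_state {R : realType} {X : countType} {Y : finType}
  {rho : X -> R} {mu piref r : X -> Y -> R} {tau : R} {V : X -> R}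
  {piV : X -> Y -> R} {x : X} {q : Y -> R} :
  prob_on rho -> pos_policy mu -> pos_policy piV ->
  (forall pi : X -> Y -> R, pos_policy pi ->
     (lossL rho mu piref r tau piV V <= lossL rho mu piref r tau pi V)%E) ->
  (lossL rho mu piref r tau piV V < +oo)%E ->
  0 < rho x -> (forall y, 0 < q y) -> \sum_(y : Y) q y = 1 ->
  state_loss (mu x) (piref x) (fun y => r x y - V x) tau (piV x) <=
  state_loss (mu x) (piref x) (fun y => r x y - V x) tau q.
Proof.
move=> [rho_ge0 _] [mu_gt0 _] [piV_gt0 piV_sum1] piV_min loss_fin rhox_gt0 q_gt0 q_sum1.
pose pi' x' y := if x' == x then q y else piV x' y.
have pi'_pos : pos_policy pi' by split=> [x' y|x']; rewrite /pi'; case: (x' == x).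
pose f (pi : X -> Y -> R) x' := (rho x' *
  state_loss (mu x') (piref x') (fun y => r x' y - V x') tau (pi x'))%:E.
have f_ge0 pi x' : (0 <= f pi x')%E.
  rewrite lee_fin mulr_ge0 // sumr_ge0 // => y _.
  by rewrite mulr_ge0 ?sqr_ge0 // ltW.
have lossL_split pi : lossL rho mu piref r tau pi V =
    ((1/2)%:E * (f pi x + esum (~` [set x]) (f pi)))%E.
  rewrite -[LHS]/((1/2)%:E * esum [set: X] (f pi))%E.
  rewrite (esumID [set x]); last by move=> i _; apply: f_ge0.
  by rewrite !setTI esum_set1 //; apply: f_ge0.
have rest_eq : esum (~` [set x]) (f pi') = esum (~` [set x]) (f piV).
  apply: eq_esum => i /= ix; rewrite /f /pi'.
  by have -> : (i == x) = false by apply/negbTE/eqP.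
have := piV_min pi' pi'_pos; rewrite !lossL_split rest_eq.
move: loss_fin; rewrite lossL_split.
(* the other states contribute the same finite amount to both sides *)
have : (0 <= esum (~` [set x]) (f piV))%E by apply: esum_ge0 => i _; apply: f_ge0.
case: (esum (~` [set x]) (f piV)) => [s| |] //= s_ge0.
  rewrite /f /pi' eqxx -!EFinD -!EFinM lee_fin => _ ineq.
  by rewrite -(ler_pM2l rhox_gt0); lra.
by rewrite /f addey // mulry gtr0_sg // mul1e.
Qed.

Local Close Scope classical_set_scope.

Definition residual {R : realType} {X : countType} {Y : finType}
  (piref pi r : X -> Y -> R) (tau : R) (V : X -> R) (x : X) (y : Y) : R :=
  r x y - V x - tau * ln (pi x y / piref x y).

Section Residual.
Context {R : realType} {X : countType} {Y : finType}.
Context {piref pi r : X -> Y -> R} {tau : R} {V : X -> R} {x : X}.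
Hypotheses (piref_gt0 : forall y, 0 < piref x y) (pi_gt0 : forall y, 0 < pi x y)
  (tau_gt0 : 0 < tau).
Local Notation residual := (residual piref pi r tau V x).

Lemma Vpi_sub_residual {mu : X -> Y -> R} : \sum_(y : Y) mu x y = 1 ->
  Vpi mu piref r tau pi x - V x = \sum_(y : Y) mu x y * residual y.
Proof.
move=> mu_sum1; rewrite -[V x]mul1r -mu_sum1 mulr_suml -sumrB.
by apply: eq_bigr => y _; rewrite /residual; ring.
Qed.

Lemma residual_expRE y :
  pi x y = expR (- V x / tau) * (piref x y * expR ((r x y - residual y) / tau)).
Proof.
have -> : (r x y - residual y) / tau = V x / tau + ln (pi x y / piref x y).
  by rewrite /residual; field; rewrite gt_eqF.
rewrite expRD lnK ?posrE ?divr_gt0 // mulNr expRN.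
have := expR_gt0 (V x / tau); have := piref_gt0 y => ? ?.
by field; rewrite !gt_eqF.
Qed.

Lemma expR_Vstar_residual : \sum_(y : Y) pi x y = 1 ->
  expR ((Vstar piref r tau x - V x) / tau) =
  \sum_(y : Y) pi x y * expR (residual y / tau).
Proof.
move=> pi_sum1; pose S := \sum_(y : Y) piref x y * expR (r x y / tau).
have [y0 _] : exists y0 : Y, true.
  have [|y0 _] := @psumr_neq0P _ _ xpredT (pi x) (fun y _ => ltW (pi_gt0 y)).
    by rewrite pi_sum1 => /eqP; rewrite oner_eq0.
  by exists y0.
have S_gt0 : 0 < S.
  rewrite /S (bigD1 y0) //= ltr_pwDl ?mulr_gt0 ?expR_gt0 //.
  by apply: sumr_ge0 => y _; rewrite mulr_ge0 ?expR_ge0 ?ltW.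
have -> : (Vstar piref r tau x - V x) / tau = ln S + - V x / tau.
  by rewrite /Vstar -/S; field; rewrite gt_eqF.
rewrite expRD lnK ?posrE // mulrC mulr_sumr; apply: eq_bigr => y _.
rewrite [in RHS]residual_expRE -!mulrA; congr (_ * (_ * _)).
by rewrite -expRD -mulrDl subrK.
Qed.

Lemma ln_div_pistar y :
  ln (pi x y / pistar piref r tau x y) = (Vstar piref r tau x - V x - residual y) / tau.
Proof.
rewrite /pistar invfM mulrA ln_div ?posrE ?divr_gt0 ?expR_gt0 // expRK.
by rewrite /residual; field; rewrite gt_eqF.
Qed.

End Residual.

Lemma residual_at_min {R : realType} {X : countType} {Y : finType}
  {rho : X -> R} {mu piref r : X -> Y -> R} {tau : R} {V : X -> R}
  {piV : X -> Y -> R} {x : X} :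
  prob_on rho -> pos_policy mu -> (forall y, 0 < piref x y) -> 0 < tau ->
  pos_policy piV ->
  (forall pi : X -> Y -> R, pos_policy pi ->
     (lossL rho mu piref r tau piV V <= lossL rho mu piref r tau pi V)%E) ->
  (lossL rho mu piref r tau piV V < +oo)%E ->
  0 < rho x ->
  forall y, residual piref piV r tau V x y =
            piV x y / mu x y * (Vpi mu piref r tau piV x - V x).
Proof.
move=> rho_prob mu_pos piref_gt0 tau_gt0 piV_pos piV_min loss_fin rhox_gt0.
have [[mu_gt0 mu_sum1] [piV_gt0 piV_sum1]] := (mu_pos, piV_pos).
pose e := residual piref piV r tau V x.
have stationary a b : mu x a * e a / piV x a = mu x b * e b / piV x b.
  apply: (@state_loss_min_stationary _ _ (mu x) _ (fun y => r x y - V x) _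
    piref_gt0 (lt0r_neq0 tau_gt0) _ (piV_gt0 x) (piV_sum1 x)) => q q_gt0 q_sum1.
  exact: lossL_min_at_state rho_prob mu_pos piV_pos piV_min loss_fin rhox_gt0 q_gt0 q_sum1.
have mu_e y : mu x y * e y = piV x y * (Vpi mu piref r tau piV x - V x).
  rewrite Vpi_sub_residual -/e; last exact: mu_sum1.
  by apply: const_ratio_sum (piV_sum1 x) stationary y => i; rewrite gt_eqF.
by move=> y; rewrite mulrAC -mu_e mulrC mulKf ?gt_eqF.
Qed.

Theorem proposition1 (R : realType) (X : countType) (Y : finType)
  (rho : X -> R) (mu piref : X -> Y -> R) (r : X -> Y -> R) (tau : R)
  (V : X -> R) (piV : X -> Y -> R) :
  prob_on rho ->
  pos_policy mu -> pos_policy piref ->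
  0 < tau ->
  pos_policy piV ->
  (forall pi : X -> Y -> R, pos_policy pi ->
     (lossL rho mu piref r tau piV V <= lossL rho mu piref r tau pi V)%E) ->
  (lossL rho mu piref r tau piV V < +oo)%E ->
  forall x : X, 0 < rho x ->
    (exists c : R, forall y : Y,
       piV x y = c * (piref x y * expR ((r x y
         - piV x y / mu x y * (Vpi mu piref r tau piV x - V x)) / tau)))
    /\
    (forall y : Y,
       `| ln (piV x y / pistar piref r tau x y) |
         <= 2 / tau * \big[Num.max/0]_(y' : Y)
              `| (Vpi mu piref r tau piV x - V x) * (1 - piV x y' / mu x y') |).
Proof.
move=> rho_prob mu_pos [piref_gt0 _] tau_gt0 piV_pos piV_min loss_fin x rhox_gt0.
have [piV_gt0 piV_sum1] := piV_pos.
have e_eq := residual_at_min rho_prob mu_pos (piref_gt0 x) tau_gt0 piV_pos piV_min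
  loss_fin rhox_gt0.
set k := Vpi mu piref r tau piV x - V x in e_eq *.
set e := residual piref piV r tau V x in e_eq *.
split.
  exists (expR (- V x / tau)) => y; rewrite -e_eq.
  exact: residual_expRE (piref_gt0 x) (piV_gt0 x) tau_gt0 y.
move=> y; set B := \big[Num.max/0]_(y' : Y) _.
have e_near y' : `|e y' - k| <= B.
  rewrite e_eq -normrN.
  have -> : - (piV x y' / mu x y' * k - k) = k * (1 - piV x y' / mu x y') by ring.
  exact: (le_bigmax 0 (fun y' => `| k * (1 - piV x y' / mu x y') |) y').
have D_near := mean_expR_dist_le tau_gt0 (fun y => ltW (piV_gt0 x y)) (piV_sum1 x)
  e_near (expR_Vstar_residual (piref_gt0 x) (piV_gt0 x) tau_gt0 (piV_sum1 x)).
rewrite (ln_div_pistar (V := V) (piref_gt0 x) (piV_gt0 x) tau_gt0) -/(e y).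
rewrite normrM [`|tau^-1|]gtr0_norm ?invr_gt0 // mulrAC ler_pM2r ?invr_gt0 //.
move: D_near (e_near y); rewrite !ler_norml => /andP[? ?] /andP[? ?].
by apply/andP; split; lra.
Qed.
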